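(* Let $h:\mathbb{R}_{\geq0}\times\mathbb{R}^n\to\mathbb{R}_{\geq0}$ be continuous and $K\subset\mathbb{R}^n$ closed. Assume (i) $h$ is positive definite with respect to $K$ uniformly in $t$: for all $t\ge0$ and $x\in\mathbb{R}^n$, $h(t,x)=0$ if and only if $x\in K$; (ii) $t\mapsto h(t,x)$ is nonincreasing for each $x\in\mathbb{R}^n$. Then for every compact set $\mathcal{I}\subset\mathbb{R}^n$ with $\mathcal{I}\cap K=\emptyset$ there exists a continuous $g:\mathbb{R}_{\geq0}\times\mathcal{I}\to\mathbb{R}_{\geq0}$ such that (1) $g$ is of class $\mathcal{C}^1$ on $\mathbb{R}_{\geq0}\times\operatorname{int}(\mathcal{I})$; (2) $\tfrac12 h(t,x)\le g(t,x)\le 2h(t,x)$ for all $(t,x)\in\mathbb{R}_{\geq0}\times\mathcal{I}$; (3) $t\mapsto g(t,x)$ is nonincreasing for each $x\in\mathcal{I}$. *)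

From HB Require Import structures.
From mathcomp Require Import all_boot all_order all_algebra.
From mathcomp Require Import all_classical all_reals all_analysis.
Set Implicit Arguments. Unset Strict Implicit. Unset Printing Implicit Defensive.
Import Order.TTheory GRing.Theory Num.Theory.
Import numFieldNormedType.Exports.
Local Open Scope classical_set_scope.
Local Open Scope ring_scope.

(* f : V -> R is of class C^1 on the open set U: differentiable at every
   point of U, and every directional derivative z |-> 'D_v f z is continuous
   on U (in finite dimension this is equivalent to continuity of z |-> 'd f z). *)
Definition C1_open {R : realType} {V : normedModType R} (U : set V) (f : V -> R) :=
  [/\ open U,
      (forall z, U z -> differentiable f z) &
      (forall v : V, forall z, U z -> {for z, continuous (fun w => 'D_v f w)})].

(* f, only meaningful on the (possibly non-open) set S, is of class C^1 on S:
   it agrees on S with a function that is C^1 on an open neighbourhood of S. *)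
Definition C1_on {R : realType} {V : normedModType R} (S : set V) (f : V -> R) :=
  exists (U : set V) (F : V -> R),
    [/\ C1_open U F, S `<=` U & (forall z, S z -> F z = f z)].

From HB Require Import structures.
From mathcomp Require Import all_boot all_order all_algebra.
From mathcomp Require Import all_classical all_reals all_analysis.
From mathcomp Require Import lra finmap.
Import Order.TTheory GRing.Theory Num.Theory.
Import numFieldNormedType.Exports.
Local Open Scope classical_set_scope.
Local Open Scope ring_scope.

Set Implicit Arguments. Unset Strict Implicit. Unset Printing Implicit Defensive.

(* For each integer k, cut [k, k + 1] into N_k steps so short that h drops by
   at most a factor 2/3 from one node to the next (uniform continuity on the
   compact [k, k + 1] x I, where h > 0).  At every node t, approximate h(t, .)
   on I within relative error a/8 by a C^1 partition-of-unity average of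
   values of h, and multiply it by 1 + a, where the slack a halves from each
   node to the next: the node values then decrease in time.  Interpolating
   between consecutive nodes with C^1 steps in t that are flat near the nodes
   yields a function that is C^1 on all of R x R^n, nonincreasing in t, and
   within a factor 2 of h by the mesh condition. *)

Section C1Calculus.
Context {R : realType} {V : normedModType R}.
Implicit Types f g : V -> R.

Definition C1 f :=
  (forall w, differentiable f w) /\ (forall v, continuous (fun w => 'D_v f w)).

Lemma C1_continuous f : C1 f -> continuous f.
Proof. by move=> [df _] w; apply: differentiable_continuous. Qed.

Lemma C1_cst (a : R) : C1 (fun _ => a).
Proof.
split=> [w|v]; first exact: differentiable_cst.
have -> : (fun w => 'D_v (fun _ : V => a) w) = fun _ => 0.
  by apply/funext => w; exact: derive_cst.
exact: cst_continuous.
Qed.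

Lemma C1D f g : C1 f -> C1 g -> C1 (fun w => f w + g w).
Proof.
move=> [df cf] [dg cg]; split=> [w|v]; first exact: differentiableD.
have -> : (fun w => 'D_v (fun w => f w + g w) w) = fun w => 'D_v f w + 'D_v g w.
  by apply/funext => w; exact: (deriveD (diff_derivable (df w)) (diff_derivable (dg w))).
by move=> w; exact: (continuousD (cf v w) (cg v w)).
Qed.

Lemma C1M f g : C1 f -> C1 g -> C1 (fun w => f w * g w).
Proof.
move=> Cf Cg; have cf := C1_continuous Cf; have cg := C1_continuous Cg.
move: Cf Cg => [df Df] [dg Dg]; split=> [w|v]; first exact: differentiableM.
have -> : (fun w => 'D_v (fun w => f w * g w) w) =
          fun w => f w * 'D_v g w + g w * 'D_v f w.
  by apply/funext => w; exact: (deriveM (diff_derivable (df w)) (diff_derivable (dg w))).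
by move=> w; exact: (continuousD (continuousM (cf w) (Dg v w)) (continuousM (cg w) (Df v w))).
Qed.

Lemma C1V f : C1 f -> (forall w, f w != 0) -> C1 (fun w => (f w)^-1).
Proof.
move=> Cf f0; have cf := C1_continuous Cf.
move: Cf => [df Df]; split=> [w|v]; first exact: differentiableV.
have -> : (fun w => 'D_v (fun w => (f w)^-1) w) =
          fun w => - (f w * f w)^-1 * 'D_v f w.
  by apply/funext => w; rewrite -expr2; exact: (deriveV (f0 w) (diff_derivable (df w))).
move=> w; have cf2 := continuousM (cf w) (cf w).
have cV := @continuousV _ _ (f \* f) w (mulf_neq0 (f0 w) (f0 w)) cf2.
exact: (continuousM (continuousN cV) (Df v w)).
Qed.

Lemma C1N f : C1 f -> C1 (fun w => - f w).
Proof.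
move=> Cf; have -> : (fun w => - f w) = fun w => -1 * f w.
  by apply/funext => w; rewrite mulN1r.
exact: C1M (C1_cst _) Cf.
Qed.

Lemma C1B f g : C1 f -> C1 g -> C1 (fun w => f w - g w).
Proof. by move=> Cf Cg; apply: C1D Cf (C1N Cg). Qed.

Lemma C1_div f g : C1 f -> C1 g -> (forall w, g w != 0) -> C1 (fun w => f w / g w).
Proof. by move=> Cf Cg g0; apply: C1M Cf (C1V Cg g0). Qed.

Lemma C1_sum (I : Type) (s : seq I) (F : I -> V -> R) :
  (forall i, C1 (F i)) -> C1 (fun w => \sum_(i <- s) F i w).
Proof.
move=> CF; elim: s => [|i s IH].
  under eq_fun do rewrite big_nil; exact: C1_cst.
under eq_fun do rewrite big_cons; exact: C1D.
Qed.

Lemma C1_prod (I : Type) (s : seq I) (F : I -> V -> R) :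
  (forall i, C1 (F i)) -> C1 (fun w => \prod_(i <- s) F i w).
Proof.
move=> CF; elim: s => [|i s IH].
  under eq_fun do rewrite big_nil; exact: C1_cst.
under eq_fun do rewrite big_cons; exact: C1M.
Qed.

End C1Calculus.

Section C1Composition.
Context {R : realType}.

Lemma C1_comp {V : normedModType R} (phi : R -> R) (f : V -> R) :
  C1 phi -> C1 f -> C1 (fun w => phi (f w)).
Proof.
move=> [dphi Dphi] Cf; have cf := C1_continuous Cf.
move: Cf => [df Df].
have dc w : differentiable (phi \o f) w by exact: differentiable_comp.
split=> [//|v].
have -> : (fun w => 'D_v (fun w => phi (f w)) w) = fun w => 'D_v f w * 'D_1 phi (f w).
  apply/funext => w.
  rewrite (deriveE v (dc w)) (diff_comp (df w) (dphi (f w))) /= (diff1E (dphi (f w))).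
  by rewrite -(deriveE v (df w)) derive1E.
by move=> w; exact: (continuousM (Df v w) (continuous_comp (cf w) (Dphi 1 (f w)))).
Qed.

Lemma C1_linear_comp {V W : normedModType R} (L : {linear V -> W}) (f : W -> R) :
  continuous L -> C1 f -> C1 (fun w => f (L w)).
Proof.
move=> cL [df Df].
have dL w : differentiable L w by exact: linear_differentiable.
have dc w : differentiable (f \o L) w by exact: differentiable_comp.
split=> [//|v].
have -> : (fun w => 'D_v (fun w => f (L w)) w) = fun w => 'D_(L v) f (L w).
  apply/funext => w.
  by rewrite (deriveE v (dc w)) (diff_comp (dL w) (df (L w))) /= (diff_lin w cL) -deriveE.
by move=> w; exact: continuous_comp (cL w) (Df (L v) (L w)).
Qed.

End C1Composition.

Section C1Real.
Context {R : realType}.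

Lemma C1_is_derive1 (phi dphi : R -> R) :
  (forall s : R, is_derive s (1 : R) phi (dphi s)) -> continuous dphi -> C1 phi.
Proof.
move=> Dphi cd.
have dif s : differentiable phi s by apply/derivable1_diffP; exact: ex_derive.
split=> // v.
have -> : (fun w => 'D_v phi w) = fun w => v * dphi w.
  apply/funext => w; rewrite (deriveE v (dif w)) (diff1E (dif w)) /= derive1E.
  by rewrite derive_val.
by move=> w; exact: (continuousM (@cst_continuous _ _ v w) (cd w)).
Qed.

Lemma C1_id : C1 (fun s : R => s).
Proof. by apply: (@C1_is_derive1 _ (fun _ => 1)) => // s; exact: cst_continuous. Qed.

Lemma C1_fst {U W : normedModType R} (f : U -> R) :
  C1 f -> C1 (fun z : U * W => f z.1).
Proof.
have lin : linear (fst : U * W -> U) by [].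
pose L : {linear (U * W)%type -> U} :=
  HB.pack (fst : U * W -> U) (GRing.isLinear.Build _ _ _ _ _ lin).
by apply: (@C1_linear_comp _ _ _ L) => z; exact: cvg_fst.
Qed.

Lemma C1_snd {U W : normedModType R} (f : W -> R) :
  C1 f -> C1 (fun z : U * W => f z.2).
Proof.
have lin : linear (snd : U * W -> W) by [].
pose L : {linear (U * W)%type -> W} :=
  HB.pack (snd : U * W -> W) (GRing.isLinear.Build _ _ _ _ _ lin).
by apply: (@C1_linear_comp _ _ _ L) => z; exact: cvg_snd.
Qed.

Lemma C1_coord (n : nat) (k : 'I_n) : C1 (fun x : 'rV[R]_n => x ord0 k).
Proof.
have lin : linear (fun x : 'rV[R]_n => x ord0 k) by move=> a x y; rewrite !mxE.
pose L : {linear 'rV[R]_n -> R} :=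
  HB.pack (fun x : 'rV[R]_n => x ord0 k) (GRing.isLinear.Build _ _ _ _ _ lin).
have cL : continuous L by move=> z; exact: coord_continuous.
exact: C1_linear_comp cL C1_id.
Qed.

End C1Real.

Section SquaredPositivePart.
Context {R : realType}.

Definition sqpos (s : R) := Num.max s 0 ^+ 2.

Lemma continuous_max0 : continuous (fun s : R => Num.max s 0).
Proof.
by move=> s; exact: (@continuous_max R R id (fun _ => 0) s cvg_id (@cst_continuous R R 0 s)).
Qed.

Lemma sqpos_ge0 s : 0 <= sqpos s.
Proof. exact: sqr_ge0. Qed.

Lemma sqpos_eq0 s : s <= 0 -> sqpos s = 0.
Proof. by move=> s0; rewrite /sqpos max_r // expr0n. Qed.

Lemma sqpos_gt0 s : (0 < sqpos s) = (0 < s).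
Proof.
case: (ltP 0 s) => s0; last by rewrite sqpos_eq0 ?ltxx.
by rewrite /sqpos max_l ?ltW // exprn_gt0.
Qed.

Lemma ler_sqpos : {homo sqpos : s t / s <= t}.
Proof.
move=> s t st; have m0 (u : R) : 0 <= Num.max u 0 by rewrite le_max lexx orbT.
by rewrite /sqpos ler_sqr ?nnegrE // ge_max !le_max st lexx !orbT.
Qed.

Lemma is_derive_sqpos (s : R) : is_derive s (1 : R) sqpos (2 * Num.max s 0).
Proof.
case: (ltgtP s 0) => [s0|s0|->].
- rewrite mulr0; apply: near_eq_is_derive (is_derive_cst 0 s 1).
  by near=> x; rewrite sqpos_eq0 // ltW //; near: x; exact: lt_nbhsl.
- have e : \forall x \near s, x * x = sqpos x.
    by near=> x; rewrite /sqpos max_l ?expr2 //; apply: ltW; near: x; exact: lt_nbhsr.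
  apply: (near_eq_is_derive e).
  apply: is_derive_eq (is_deriveM (is_derive_id s 1) (is_derive_id s 1)) _.
  by rewrite -scalerDl scaler1; lra.
- rewrite mulr0; apply/is_derive1_caratheodory.
  exists (fun z => Num.max z 0); split.
  + move=> z; rewrite (sqpos_eq0 (lexx 0)) !subr0 /sqpos expr2.
    by case: (leP z 0); rewrite ?mul0r.
  + exact: continuous_max0.
  + by rewrite max_r.
Unshelve. all: by end_near.
Qed.

Lemma C1_sqpos : C1 sqpos.
Proof.
apply: C1_is_derive1 is_derive_sqpos _ => s.
by have := continuousM (@cst_continuous R R 2 s) (@continuous_max0 s).
Qed.

End SquaredPositivePart.

Section LocalC1.
Context {R : realType} {V : normedModType R}.

Lemma differentiable_near0 (d : V -> R) x :
  (\forall w \near x, d w = 0) -> differentiable d x.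
Proof.
move=> d0; have dx0 : d x = 0 := nbhs_singleton d0.
have shift0 : (fun y : V => y + x) @ (0 : V) --> x.
  by rewrite -[x in _ --> x]add0r; exact: (cvgD cvg_id (cvg_cst x)).
have dlo : d \o shift x = cst (d x) + \0 +o_0 id.
  have d0' : \forall y \near 0, d (y + x) = 0 := shift0 _ d0.
  apply/eqaddoP => _/posnumP[eps].
  near=> y; have -> : (d \o shift x - (cst (d x) + \0)) y = 0.
    change (d (y + x) - (d x + 0) = 0).
    by rewrite dx0 (near d0' y) // addr0 subr0.
  by rewrite normr0 mulr_ge0.
have dd : 'd d x = \0 :> (V -> R) by apply/diff_unique => //; exact: cst_continuous.
by apply/diff_locallyP; rewrite dd; split => //; exact: cst_continuous.
Unshelve. all: by end_near.
Qed.

Lemma near_eq_differentiable (f F : V -> R) x :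
  (\forall w \near x, f w = F w) -> differentiable F x -> differentiable f x.
Proof.
move=> fF dF; pose d w := f w - F w.
have -> : f = F + d by apply/funext => w; rewrite /d /= addrC subrK.
apply: differentiableD dF (differentiable_near0 _).
by near=> w; rewrite /d (near fF w) // subrr.
Unshelve. all: by end_near.
Qed.

Lemma C1_local (f : V -> R) :
  (forall z : V, exists2 F, C1 F & \forall w \near z, f w = F w) -> C1 f.
Proof.
move=> loc; split=> [z|v z]; have [F [dF DF] fF] := loc z.
  exact: near_eq_differentiable fF (dF z).
have DfDF : \forall w \near z, 'D_v F w = 'D_v f w.
  by apply: filterS (near_join fF) => w /(near_eq_derive v) ->.
have DFz : (fun w => 'D_v F w) @ z --> 'D_v f z.
  by rewrite -(nbhs_singleton DfDF); exact: DF.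
exact: cvg_trans (near_eq_cvg DfDF) DFz.
Qed.

Lemma C1_on_C1 (S : set V) (f : V -> R) : C1 f -> C1_on S f.
Proof.
move=> [df Df]; exists setT, f; split=> //; split=> // [|v z _]; first exact: openT.
exact: Df.
Qed.

End LocalC1.

Lemma weighted_mean_bounds {R : realFieldType} {I : eqType} (s : seq I)
    (w v : I -> R) (lo hi : R) :
  (forall i, i \in s -> 0 <= w i) -> 0 < \sum_(i <- s) w i ->
  (forall i, i \in s -> 0 < w i -> lo <= v i <= hi) ->
  lo <= (\sum_(i <- s) w i * v i) / \sum_(i <- s) w i <= hi.
Proof.
move=> w0 sw lohi; rewrite ler_pdivlMr // ler_pdivrMr // !mulr_sumr !big_seq.
have wv i : i \in s -> lo * w i <= w i * v i /\ w i * v i <= hi * w i.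
  move=> si; rewrite ![_ * w i]mulrC; have [wi0|] := ltP 0 (w i); last first.
    move=> wi; have -> : w i = 0 by apply/eqP; rewrite eq_le wi w0.
    by rewrite !mul0r.
  by have /andP[l h] := lohi i si wi0; rewrite !ler_pM2l.
by apply/andP; split; apply: ler_sum => i si; case: (wv i si).
Qed.

Section RowBumps.
Context {R : realType} {n : nat}.
Implicit Types (c x : 'rV[R]_n) (r : R).

Lemma ball_rowP c r x :
  ball c r x <-> 0 < r /\ forall k, `|c ord0 k - x ord0 k| < r.
Proof.
split=> [[r0 cx]|[r0 cx]]; first by split=> // k; exact: cx.
by split=> // i j; rewrite [i]ord1; exact: cx.
Qed.

Definition cube_bump c r x :=
  \prod_(k < n) sqpos (r ^+ 2 - (x ord0 k - c ord0 k) ^+ 2).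

Definition cube_antibump c r x :=
  \sum_(k < n) sqpos ((x ord0 k - c ord0 k) ^+ 2 - r ^+ 2 / 4).

Lemma cube_bump_ge0 c r x : 0 <= cube_bump c r x.
Proof. by apply: prodr_ge0 => k _; exact: sqpos_ge0. Qed.

Lemma cube_bump_gt0 c r x : 0 < r -> (0 < cube_bump c r x <-> ball c r x).
Proof.
move=> r0; split=> [bx|/ball_rowP[_ cx]]; last first.
  apply: prodr_gt0 => k _; rewrite sqpos_gt0.
  by have := cx k; rewrite distrC ltr_norml => /andP[? ?]; nra.
apply/ball_rowP; split=> // k.
have /prodf_neq0/(_ k isT) sk : cube_bump c r x != 0 by rewrite gt_eqF.
have : 0 < sqpos (r ^+ 2 - (x ord0 k - c ord0 k) ^+ 2) by rewrite lt0r sk sqpos_ge0.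
rewrite sqpos_gt0 => {}sk.
by rewrite distrC ltr_norml; apply/andP; split; nra.
Qed.

Lemma cube_antibump_ge0 c r x : 0 <= cube_antibump c r x.
Proof. by apply: sumr_ge0 => k _; exact: sqpos_ge0. Qed.

Lemma cube_antibump_eq0_ball c r x : 0 < r -> cube_antibump c r x = 0 -> ball c r x.
Proof.
move=> r0 a0; apply/ball_rowP; split=> // k.
have sk0 := psumr_eq0P (fun k _ => sqpos_ge0 _) a0 isT.
have : ~~ (0 < (x ord0 k - c ord0 k) ^+ 2 - r ^+ 2 / 4) by rewrite -sqpos_gt0 sk0 ltxx.
rewrite -leNgt => sk.
by rewrite distrC ltr_norml; apply/andP; split; nra.
Qed.

Lemma cube_antibump_eq0 c r x : 0 < r -> ball c (r / 2) x -> cube_antibump c r x = 0.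
Proof.
move=> r0 /ball_rowP[_ cx]; apply: big1 => k _; apply: sqpos_eq0.
by have := cx k; rewrite distrC ltr_norml => /andP[? ?]; nra.
Qed.

Lemma C1_cube_bump c r : C1 (cube_bump c r).
Proof.
apply: C1_prod => k; apply: C1_comp C1_sqpos _; apply: C1B (C1_cst _) _.
by apply: C1M; apply: C1B (C1_coord k) (C1_cst _).
Qed.

Lemma C1_cube_antibump c r : C1 (cube_antibump c r).
Proof.
apply: C1_sum => k; apply: C1_comp C1_sqpos _; apply: C1B _ (C1_cst _).
by apply: C1M; apply: C1B (C1_coord k) (C1_cst _).
Qed.

End RowBumps.

Section BumpPartition.
Context {R : realType} {n : nat} (D : seq 'rV[R]_n) (rho : 'rV[R]_n -> R).
Hypothesis rho_gt0 : forall c, c \in D -> 0 < rho c.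
Implicit Types c x : 'rV[R]_n.

Definition cube_bump_sum x := \sum_(c <- D) cube_bump c (rho c) x.

(* The guard [cube_antibump_prod] vanishes on the half-size cubes, which will
   cover I, and is positive wherever all bumps vanish: it keeps the
   denominator of the weighted mean positive everywhere without changing it
   on I. *)
Definition cube_antibump_prod x := \prod_(c <- D) cube_antibump c (rho c) x.

Lemma cube_bump_sum_gt0 c x : c \in D -> ball c (rho c) x -> 0 < cube_bump_sum x.
Proof.
move=> cD cx; rewrite /cube_bump_sum (big_rem c cD) /=.
apply: ltr_wpDr; first by apply: sumr_ge0 => i _; exact: cube_bump_ge0.
exact/(cube_bump_gt0 _ _ (rho_gt0 cD)).
Qed.

Lemma cube_bump_partition_gt0 x : 0 < cube_bump_sum x + cube_antibump_prod x.
Proof.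
have s0 : 0 <= cube_bump_sum x by apply: sumr_ge0 => c _; exact: cube_bump_ge0.
have [a0|] := ltP 0 (cube_antibump_prod x); first by rewrite ltr_wpDl.
rewrite le_eqVlt ltNge prodr_ge0 ?orbF => [/eqP a0|c _]; last exact: cube_antibump_ge0.
have /hasP[c cD /= /eqP ac] : has (fun c => true && (cube_antibump c (rho c) x == 0)) D.
  by rewrite -prodf_seq_eq0; apply/eqP.
by rewrite a0 addr0; exact: cube_bump_sum_gt0 cD (cube_antibump_eq0_ball (rho_gt0 cD) ac).
Qed.

Lemma cube_antibump_prod_eq0 c x :
  c \in D -> ball c (rho c / 2) x -> cube_antibump_prod x = 0.
Proof.
move=> cD cx; rewrite /cube_antibump_prod (big_rem c cD) /=.
by rewrite cube_antibump_eq0 ?rho_gt0 // mul0r.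
Qed.

End BumpPartition.

Section C1Approximation.
Context {R : realType} {n : nat}.

Lemma C1_approx (H : 'rV[R]_n -> R) (I : set 'rV[R]_n) (eps : R) :
  compact I -> (forall x, I x -> 0 < H x) ->
  (forall c, I c -> {for c, continuous H}) -> 0 < eps -> eps <= 1 ->
  exists2 p : 'rV[R]_n -> R, C1 p &
    forall x, I x -> (1 - eps) * H x <= p x <= (1 + eps) * H x.
Proof.
move=> cI H0 cH e0 e1.
have radius c : exists r, I c -> 0 < r /\
    forall x, ball c r x -> `|H c - H x| < eps / 2 * H c.
  have [Ic|] := pselect (I c); last by exists 1.
  have /cvgr_dist_lt/(_ _ (mulr_gt0 (divr_gt0 e0 (ltr0Sn _ 1)) (H0 c Ic))) := cH c Ic.
  by move=> /nbhs_ballP[r r0 cr]; exists r => _; split.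
have [rho rhoP] := choice radius.
have cover : I `<=` \bigcup_(c in I) ball c (rho c / 2).
  move=> x Ix; exists x => //; apply: ballxx.
  by rewrite divr_gt0 //; case: (rhoP x Ix).
have [D DI covD] : exists2 D : seq 'rV[R]_n, (forall c, c \in D -> I c) &
    forall x, I x -> exists2 c, c \in D & ball c (rho c / 2) x.
  move: cI; rewrite compact_cover => /(_ _ I _ (fun c _ => ball_open _ _) cover).
  by case=> D DI covD; exists D => [c /DI/set_mem|x /covD[c cD cx]] //; exists c.
have rho_gt0 c : c \in D -> 0 < rho c by move/DI/rhoP => [].
exists (fun x => (\sum_(c <- D) cube_bump c (rho c) x * H c) /
                 (cube_bump_sum D rho x + cube_antibump_prod D rho x)).
  apply: C1_div; last by move=> x; rewrite gt_eqF // cube_bump_partition_gt0.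
  - by apply: C1_sum => c; apply: C1M (C1_cube_bump _ _) (C1_cst _).
  - apply: C1D; first by apply: C1_sum => c; exact: C1_cube_bump.
    by apply: C1_prod => c; exact: C1_cube_antibump.
move=> x Ix; have [c cD cx] := covD x Ix.
rewrite (cube_antibump_prod_eq0 rho_gt0 cD cx) addr0.
apply: weighted_mean_bounds => [c' _||]; first exact: cube_bump_ge0.
  by apply: (cube_bump_sum_gt0 rho_gt0 cD); apply: le_ball cx; have := rho_gt0 c cD; lra.
move=> c' c'D /(cube_bump_gt0 _ _ (rho_gt0 _ c'D)) /(proj2 (rhoP c' (DI c' c'D))).
have Hx := H0 x Ix; have Hc := H0 c' (DI c' c'D).
by rewrite ltr_norml => /andP[l u]; apply/andP; split; nra.
Qed.

End C1Approximation.

Lemma within_continuous_dist_lt {R : realType} {T : topologicalType} (A : set T)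
    (f : T -> R) z0 :
  {within A, continuous f} -> A z0 ->
  forall e, 0 < e -> \forall z \near z0, A z -> `|f z0 - f z| < e.
Proof.
move=> fc Az0 e e0; have /cvgr_dist_lt/(_ e e0) := fc z0.
by have -> : nbhs (z0 : subspace A) = within A (nbhs z0) by rewrite nbhs_subspace_in.
Qed.

Section TimeMesh.
Context {R : realType} {n : nat} (h : R -> 'rV[R]_n -> R).
Hypothesis hc :
  {within [set z : R * 'rV[R]_n | 0 <= z.1], continuous (fun z => h z.1 z.2)}.

Lemma slice_ratio_ball (z0 : R * 'rV[R]_n) :
  0 <= z0.1 -> 0 < h z0.1 z0.2 ->
  exists2 r, 0 < r & forall z, ball z0 r z -> 0 <= z.1 ->
    9 / 10 * h z0.1 z0.2 < h z.1 z.2 < 11 / 10 * h z0.1 z0.2.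
Proof.
move=> z00 Hz0.
have /nbhs_ballP[r r0 Hr] := within_continuous_dist_lt hc z00 (divr_gt0 Hz0 (ltr0Sn _ 9)).
exists r => // z z0z z0'; have := Hr z z0z z0'; rewrite /= ltr_distlC.
by move=> /andP[? ?]; apply/andP; split; lra.
Qed.

Lemma continuous_slice tau : 0 <= tau -> continuous (h tau).
Proof.
move=> tau0 x; apply/(@cvgrPdist_lt _ _ _ _ (nbhs_filter x)) => e e0.
have /nbhs_ballP[r r0 Hr] := within_continuous_dist_lt hc (tau0 : 0 <= (tau, x).1) e0.
apply/nbhs_ballP; exists r => // y xy.
by apply: (Hr (tau, y)) => //; split => //=; exact: ballxx.
Qed.

Lemma uniform_time_step (I : set 'rV[R]_n) (a : R) :
  compact I -> 0 <= a -> (forall t x, 0 <= t -> I x -> 0 < h t x) ->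
  exists2 d, 0 < d & forall s s' x, a <= s <= a + 1 -> s <= s' <= s + d -> I x ->
    2 / 3 * h s x <= h s' x.
Proof.
move=> cI a0 hpos; pose C := `[a, a + 1] `*` I.
have cC : compact C by apply: compact_setX => //; exact: segment_compact.
pose P d (z : R * 'rV[R]_n) :=
  forall s', z.1 <= s' <= z.1 + d -> 2 / 3 * h z.1 z.2 <= h s' z.2.
have P_near z0 : C z0 -> \forall z \near z0 & d \near (0 : R)^'+, C z -> P d z.
  case: z0 => t0 x0 [/= t0a Ix0]; have t00 : 0 <= t0.
    by move: t0a; rewrite in_itv /= => /andP[/(le_trans a0)].
  have [r r0 Hr] := @slice_ratio_ball (t0, x0) t00 (hpos _ _ t00 Ix0).
  exists (ball (t0, x0) (r / 2), [set d : R | d < r / 2]).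
    have r20 : 0 < r / 2 by rewrite divr_gt0.
    by split; [exact: nbhsx_ballx|exact: nbhs_right_lt].
  move=> [[t x] d] /= [[/= t0t x0x] dr] [/= ta Ix] s' /andP[ts' s'd].
  have t0' : 0 <= t by move: ta; rewrite in_itv /= => /andP[/(le_trans a0)].
  rewrite /= in ts' s'd dr; have r2r : r / 2 <= r by lra.
  have /andP[l1 u1] := Hr (t, x) (conj (le_ball r2r t0t) (le_ball r2r x0x)) t0'.
  have t0s' : ball t0 r s'.
    move: t0t; rewrite /ball /= !ltr_norml => /andP[? ?].
    by apply/andP; split; lra.
  have /andP[l2 u2] := Hr (s', x) (conj t0s' (le_ball r2r x0x)) (le_trans t0' ts').
  rewrite /= in l1 u1 l2 u2; lra.
have [d d0 Pd] : exists2 d : R, 0 < d & C `<=` P d.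
  have /(near_covering_withinP C).2 nc := (compact_near_coveringP C).1 cC.
  have CP : \forall d \near (0 : R)^'+, C `<=` P d by apply: nc => //; exact: P_near.
  by have [d [d0 Pd]] := filter_ex (filterI (nbhs_right_gt (0 : R)) CP); exists d.
exists d => // s s' x sa ss' Ix; exact: Pd (s, x) _ s' ss'.
Qed.

End TimeMesh.

Section SmoothStep.
Context {R : realType}.
Implicit Types u v : R.

Definition smoothstep (u : R) := sqpos u / (sqpos u + sqpos (1 - u)).

Lemma smoothstep_den_gt0 u : 0 < sqpos u + sqpos (1 - u).
Proof.
have [u0|u0] := ltP 0 u; first by rewrite ltr_wpDr ?sqpos_ge0 ?sqpos_gt0.
by rewrite ltr_wpDl ?sqpos_ge0 ?sqpos_gt0 //; lra.
Qed.

Lemma smoothstep0 u : u <= 0 -> smoothstep u = 0.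
Proof. by move=> u0; rewrite /smoothstep sqpos_eq0 // mul0r. Qed.

Lemma smoothstep1 u : 1 <= u -> smoothstep u = 1.
Proof.
move=> u1; rewrite /smoothstep [sqpos (1 - u)]sqpos_eq0 ?addr0 ?divff //; last by lra.
by rewrite gt_eqF // sqpos_gt0; lra.
Qed.

Lemma ler_smoothstep : {homo smoothstep : u v / u <= v}.
Proof.
move=> u v uv; rewrite /smoothstep ler_pdivrMr ?smoothstep_den_gt0 //.
rewrite mulrAC ler_pdivlMr ?smoothstep_den_gt0 //.
have su := ler_sqpos uv.
have s1 : sqpos (1 - v) <= sqpos (1 - u) by apply: ler_sqpos; lra.
have := ler_pM (sqpos_ge0 u) (sqpos_ge0 _) su s1.
have := sqpos_ge0 u; have := sqpos_ge0 v; rewrite !mulrDr; nra.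
Qed.

Lemma C1_smoothstep : C1 smoothstep.
Proof.
apply: C1_div C1_sqpos _ _; last by move=> u; rewrite gt_eqF // smoothstep_den_gt0.
by apply: C1D C1_sqpos (C1_comp C1_sqpos (C1B (C1_cst 1) C1_id)).
Qed.

End SmoothStep.

Lemma near_truncn {R : realType} (t0 : R) :
  t0 < 1 \/ (Num.truncn t0)%:R < t0 ->
  \forall t \near t0, Num.truncn t = Num.truncn t0.
Proof.
have trunc0 (t : R) : t < 1 -> Num.truncn t = 0%N.
  by move=> t1; apply/eqP; rewrite -leqn0 truncn_le_nat.
case=> [t01|kt0].
  by rewrite trunc0 //; near=> t; apply: trunc0; near: t; exact: lt_nbhsl.
have t00 : 0 <= t0 by apply: le_trans (ltW kt0).
have /andP[_ t0k] := truncn_itv t00.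
near=> t; apply: truncn_def; apply/andP; split.
  by apply: ltW; near: t; exact: lt_nbhsr.
by near: t; exact: lt_nbhsl.
Unshelve. all: by end_near.
Qed.

Section Construction.
Context {R : realType} {n : nat} (h : R -> 'rV[R]_n -> R) (I : set 'rV[R]_n).
Context (P : R -> R -> 'rV[R]_n -> R) (N : nat -> nat).
Hypothesis hmono : forall x t s, 0 <= t -> t <= s -> h s x <= h t x.
Hypothesis hpos : forall t x, 0 <= t -> I x -> 0 < h t x.
Hypothesis P_C1 : forall tau e, 0 <= tau -> 0 < e -> e <= 1 -> C1 (P tau e).
Hypothesis P_bounds : forall tau e x, 0 <= tau -> 0 < e -> e <= 1 -> I x ->
  (1 - e) * h tau x <= P tau e x <= (1 + e) * h tau x.
Hypothesis N_gt0 : forall k, (0 < N k)%N.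
Hypothesis N_mesh : forall k i x, (i < N k)%N -> I x ->
  2 / 3 * h (k%:R + i%:R / (N k)%:R) x <= h (k%:R + i.+1%:R / (N k)%:R) x.

Definition node k i : R := k%:R + i%:R / (N k)%:R.

Definition node_rank k i := (\sum_(l < k) N l + i)%N.

Definition slack j : R := 4^-1 * 2^-1 ^+ j.

(* [node_rank] numbers all nodes consecutively, so the slack keeps halving
   across integer times and [nodeval k (N k) = nodeval k.+1 0]. *)
Definition nodeval k i x :=
  (1 + slack (node_rank k i)) * P (node k i) (slack (node_rank k i) / 8) x.

(* [switch k i] rises from 0 to 1 while [N k * (t - k)] runs over
   [i + 1/4, i + 3/4]; hence [piece k] is locally constant in time around
   every node. *)
Definition switch k i (t : R) :=
  smoothstep (2 * (N k)%:R * (t - k%:R) - 2 * i%:R - 2^-1).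

Definition piece k t x :=
  nodeval k 0 x - \sum_(i < N k) switch k i t * (nodeval k i x - nodeval k i.+1 x).

Definition smooth_h t x := piece (Num.truncn t) t x.

Lemma N_gt0R k : 0 < (N k)%:R :> R.
Proof. by rewrite ltr0n. Qed.

Lemma slack_gt0 j : 0 < slack j.
Proof. by rewrite mulr_gt0 // exprn_gt0. Qed.

Lemma slack_le j : slack j <= 4^-1.
Proof. by rewrite ler_piMr // exprn_ile1 //; lra. Qed.

Lemma slackS j : slack j.+1 = slack j / 2.
Proof. by rewrite /slack exprSr mulrA. Qed.

Lemma node_ge0 k i : 0 <= node k i.
Proof. by rewrite addr_ge0 // divr_ge0. Qed.

Lemma ler_node k : {homo node k : i j / (i <= j)%N >-> i <= j}.
Proof. by move=> i j ij; rewrite lerD2l ler_pM2r ?invr_gt0 ?N_gt0R // ler_nat. Qed.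

Lemma node0 k : node k 0 = k%:R.
Proof. by rewrite /node mul0r addr0. Qed.

Lemma node_last k : node k (N k) = k.+1%:R.
Proof. by rewrite /node divff ?gt_eqF ?N_gt0R // natr1. Qed.

Lemma nodeval_last k : nodeval k (N k) = nodeval k.+1 0.
Proof.
by rewrite /nodeval node_last node0 /node_rank big_ord_recr addn0.
Qed.

Lemma nodeval_bounds k i x (a := slack (node_rank k i)) : I x ->
  (1 + a) * (1 - a / 8) * h (node k i) x <= nodeval k i x <=
  (1 + a) * (1 + a / 8) * h (node k i) x.
Proof.
move=> Ix; have a0 : 0 < a := slack_gt0 _; have a1 : a <= 4^-1 := slack_le _.
have a8 : a / 8 <= 1 by lra.
have /andP[l u] := P_bounds (node_ge0 k i) (divr_gt0 a0 (ltr0Sn _ 7)) a8 Ix.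
have a1' : 0 < 1 + a by lra.
rewrite /nodeval -/a -[_ * (1 - a / 8) * _]mulrA -[_ * (1 + a / 8) * _]mulrA.
by rewrite !ler_pM2l // l u.
Qed.

Lemma nodeval_step k i x : (i < N k)%N -> I x -> nodeval k i.+1 x <= nodeval k i x.
Proof.
move=> iN Ix.
have /andP[l _] := nodeval_bounds k i Ix; have /andP[_ u] := nodeval_bounds k i.+1 Ix.
move: l u; rewrite /node_rank addnS slackS; set a := slack _ => l u.
have a0 : 0 < a := slack_gt0 _; have a1 : a <= 4^-1 := slack_le _.
have h1 : 0 < h (node k i.+1) x := hpos (node_ge0 k i.+1) Ix.
have h10 : h (node k i.+1) x <= h (node k i) x.
  exact: hmono (node_ge0 _ _) (ler_node _ _).
have c : (1 + a / 2) * (1 + a / 2 / 8) <= (1 + a) * (1 - a / 8) by nra.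
apply: le_trans u _; apply: le_trans l; apply: le_trans (ler_wpM2l _ h10) _; first nra.
by apply: ler_wpM2r c; lra.
Qed.

Lemma nodeval_le_first k i x :
  (i <= N k)%N -> I x -> nodeval k i x <= nodeval k 0 x.
Proof.
move=> iN Ix; elim: i iN => [//|i IH] iN.
exact: le_trans (nodeval_step iN Ix) (IH (ltnW iN)).
Qed.

Lemma nodeval_first_anti x k k' :
  I x -> (k <= k')%N -> nodeval k' 0 x <= nodeval k 0 x.
Proof.
move=> Ix; elim: k' => [|k' IH]; first by rewrite leqn0 => /eqP ->.
rewrite leq_eqVlt ltnS => /predU1P[-> //|kk'].
by apply: le_trans (IH kk'); rewrite -nodeval_last nodeval_le_first.
Qed.

Lemma switch_node k l i : switch k l (node k i) = (l < i)%N%:R.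
Proof.
rewrite /switch; have -> : 2 * (N k)%:R * (node k i - k%:R) = 2 * i%:R :> R.
  rewrite /node addrC addKr -mulrA [(N k)%:R * _]mulrCA.
  by rewrite mulfV ?mulr1 // gt_eqF ?N_gt0R.
case: ltnP => [li|il].
  by apply: smoothstep1; move: li; rewrite -(ler_nat R) -natr1 => ?; lra.
by apply: smoothstep0; move: il; rewrite -(ler_nat R) => ?; lra.
Qed.

Lemma piece_eq k t x i : (i <= N k)%N ->
  (forall l, (l < N k)%N -> switch k l t = (l < i)%N%:R) ->
  piece k t x = nodeval k i x.
Proof.
move=> iN sw; rewrite /piece.
under eq_bigr => l _ do rewrite sw // mulr_natl mulrb.
rewrite -big_mkcond /= -(big_ord_widen _ (fun l => nodeval k l x - nodeval k l.+1 x) iN).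
under eq_bigr do rewrite -opprB.
rewrite sumrN -(big_mkord xpredT (fun l => nodeval k l.+1 x - nodeval k l x)).
by rewrite telescope_sumr // opprB subKr.
Qed.

Lemma piece_node k i x : (i <= N k)%N -> piece k (node k i) x = nodeval k i x.
Proof. by move=> iN; apply: piece_eq => // l _; exact: switch_node. Qed.

Lemma ler_switch k l : {homo switch k l : t s / t <= s}.
Proof.
move=> t s ts; apply: ler_smoothstep.
by rewrite !lerD2r ler_wpM2l ?lerD2r // mulr_ge0 // ltW ?N_gt0R.
Qed.

Lemma le_piece k x t s : I x -> t <= s -> piece k s x <= piece k t x.
Proof.
move=> Ix ts; rewrite lerD2l lerN2; apply: ler_sum => l _.
by rewrite ler_wpM2r ?subr_ge0 ?nodeval_step ?ler_switch.
Qed.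

Lemma node_bracket t (k := Num.truncn t)
    (i := Num.truncn ((N k)%:R * (t - k%:R))) : 0 <= t ->
  [/\ (i < N k)%N, node k i <= t & t <= node k i.+1].
Proof.
move=> t0; have /andP[kt tk] := truncn_itv t0; have N0 := N_gt0R k.
have u0 : 0 <= (N k)%:R * (t - k%:R) by rewrite mulr_ge0 ?subr_ge0 // ltW.
have /andP[iu ui] := truncn_itv u0; rewrite -/i in iu ui.
have uN : (N k)%:R * (t - k%:R) < (N k)%:R by rewrite -natr1 in tk; nra.
split; first by rewrite -(ltr_nat R); exact: le_lt_trans uN.
- by rewrite -lerBrDl ler_pdivrMr // mulrC.
- by rewrite -lerBlDl ler_pdivlMr // mulrC ltW.
Qed.

Lemma smooth_h_bounds t x :
  0 <= t -> I x -> h t x / 2 <= smooth_h t x <= 2 * h t x.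
Proof.
move=> t0 Ix; have [iN it ti] := node_bracket t0; rewrite /smooth_h.
set k := Num.truncn t in iN it ti *; set i := Num.truncn _ in iN it ti.
have h0 := hpos t0 Ix; have hi := hpos (node_ge0 k i) Ix.
have hi1 : 2 / 3 * h (node k i) x <= h (node k i.+1) x := N_mesh iN Ix.
have hti1 : h (node k i.+1) x <= h t x := hmono x t0 ti.
have hit : h t x <= h (node k i) x := hmono x (node_ge0 k i) it.
have gi : piece k t x <= nodeval k i x by rewrite -piece_node 1?ltnW // le_piece.
have gi1 : nodeval k i.+1 x <= piece k t x by rewrite -piece_node // le_piece.
have /andP[_ qi] := nodeval_bounds k i Ix.
have /andP[qi1 _] := nodeval_bounds k i.+1 Ix.
move: qi qi1; set a := slack _; set b := slack _ => qi qi1.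
have a0 : 0 < a := slack_gt0 _; have a1 : a <= 4^-1 := slack_le _.
have b0 : 0 < b := slack_gt0 _; have b1 : b <= 4^-1 := slack_le _.
(* For a, b <= 1/4 the node factors lie in [31/32, 165/128], and
   31/32 * 2/3 >= 1/2, 165/128 * 3/2 <= 2. *)
apply/andP; split.
- have : 31 / 32 * h (node k i.+1) x <= (1 + b) * (1 - b / 8) * h (node k i.+1) x.
    by apply: ler_wpM2r; [lra|nra].
  lra.
- have : (1 + a) * (1 + a / 8) * h (node k i) x <= 165 / 128 * h (node k i) x.
    by apply: ler_wpM2r; [lra|nra].
  lra.
Qed.

Lemma smooth_h_anti x t s :
  I x -> 0 <= t -> t <= s -> smooth_h s x <= smooth_h t x.
Proof.
move=> Ix t0 ts; rewrite /smooth_h; have s0 := le_trans t0 ts.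
have := le_truncn ts; set k := Num.truncn t; set m := Num.truncn s.
rewrite leq_eqVlt => /predU1P[<-|km]; first exact: le_piece.
have /andP[_ tk] := truncn_itv t0; have /andP[ms _] := truncn_itv s0.
have e1 : piece m s x <= nodeval m 0 x by rewrite -piece_node // node0 le_piece.
have e2 : nodeval k.+1 0 x <= piece k t x.
  by rewrite -nodeval_last -piece_node // node_last le_piece // ltW.
by apply: le_trans e1 (le_trans _ e2); exact: nodeval_first_anti.
Qed.

Lemma C1_nodeval k i : C1 (nodeval k i).
Proof.
have a0 := slack_gt0 (node_rank k i); have a1 := slack_le (node_rank k i).
apply: C1M (C1_cst _) (P_C1 (node_ge0 k i) _ _); lra.
Qed.

Lemma C1_switch k i : C1 (switch k i).
Proof.
apply: C1_comp C1_smoothstep _; apply: C1B (C1B _ (C1_cst _)) (C1_cst _).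
exact: C1M (C1_cst _) (C1B C1_id (C1_cst _)).
Qed.

Lemma C1_piece k : C1 (fun z : R * 'rV[R]_n => piece k z.1 z.2).
Proof.
apply: C1B (C1_snd (C1_nodeval k 0)) (C1_sum _ _) => i.
apply: C1M (C1_fst (C1_switch k i)) (C1_snd (f := fun x => _ - _) _).
exact: C1B (C1_nodeval k i) (C1_nodeval k i.+1).
Qed.

Lemma piece_eq_first k t x :
  (N k)%:R * (t - k%:R) <= 4^-1 -> piece k t x = nodeval k 0 x.
Proof.
move=> tk; apply: piece_eq => // l _; apply: smoothstep0.
by have : 0 <= l%:R :> R by []; lra.
Qed.

Lemma piece_eq_last k t x :
  (N k)%:R * (k.+1%:R - t) <= 4^-1 -> piece k t x = nodeval k.+1 0 x.
Proof.
move=> tk; rewrite -nodeval_last; apply: piece_eq => // l lN; rewrite lN.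
apply: smoothstep1; move: lN; rewrite -(ler_nat R).
by rewrite -[k.+1%:R]natr1 -[l.+1%:R]natr1 in tk * => lN; nra.
Qed.

Lemma smooth_h_near_integer k :
  \forall t \near (k.+1%:R : R), smooth_h t = nodeval k.+1 0.
Proof.
have N1 : 1 <= (N k.+1)%:R :> R by rewrite ler1n N_gt0.
have N0 : 1 <= (N k)%:R :> R by rewrite ler1n N_gt0.
pose r : R := (4 * ((N k.+1)%:R + (N k)%:R))^-1.
have r0 : 0 < r by rewrite invr_gt0; lra.
have r4 : 4 * ((N k.+1)%:R + (N k)%:R) * r = 1 by rewrite mulfV // gt_eqF //; lra.
have [Nr1 Nr0 r1] : [/\ (N k.+1)%:R * r <= 4^-1, (N k)%:R * r <= 4^-1 & r < 1].
  by split; nra.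
apply/nbhs_ballP; exists r => // t; rewrite /ball /= ltr_distlC => /andP[lt ut].
apply/funext => x; rewrite /smooth_h -[k.+1%:R]natr1 in lt ut *.
have [kt|tk] := leP (k%:R + 1) t.
- rewrite (@truncn_def _ _ k.+1) ?piece_eq_first //; last by rewrite -!natr1; lra.
  by rewrite -natr1; nra.
- rewrite (@truncn_def _ _ k) ?piece_eq_last //; last by rewrite -natr1; lra.
  by rewrite -natr1; nra.
Qed.

Lemma smooth_h_locally_C1 (t0 : R) : exists2 F : R -> 'rV[R]_n -> R,
  C1 (fun z : R * 'rV[R]_n => F z.1 z.2) & \forall t \near t0, smooth_h t = F t.
Proof.
have [t0k|] := pselect (t0 < 1 \/ (Num.truncn t0)%:R < t0).
  exists (piece (Num.truncn t0)); first exact: C1_piece.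
  by near=> t; rewrite /smooth_h (near (near_truncn t0k) t).
move=> /not_orP[/negP t01 /negP t0k]; rewrite -!leNgt in t01 t0k.
have t00 : 0 <= t0 by lra.
have /andP[kt0 _] := truncn_itv t00.
have : (0 < Num.truncn t0)%N by rewrite truncn_gt_nat.
case: (Num.truncn t0) t0k kt0 => [//|k] t0k kt0 _.
have -> : t0 = k.+1%:R by apply/eqP; rewrite eq_le t0k kt0.
exists (fun _ => nodeval k.+1 0); first exact: C1_snd (C1_nodeval _ _).
exact: smooth_h_near_integer.
Unshelve. all: by end_near.
Qed.

Lemma C1_smooth_h : C1 (fun z : R * 'rV[R]_n => smooth_h z.1 z.2).
Proof.
apply: C1_local => -[t0 x0]; have [F CF hF] := smooth_h_locally_C1 t0.
exists (fun z => F z.1 z.2) => //.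
have : \forall z \near (t0, x0), smooth_h z.1 = F z.1.
  exact: (@cvg_fst _ _ (nbhs t0) (nbhs x0) _) _ hF.
by apply: filterS => -[t x] /= ->.
Qed.

End Construction.

Section Choices.
Context {R : realType} {n : nat} (h : R -> 'rV[R]_n -> R) (I : set 'rV[R]_n).
Hypothesis hc :
  {within [set z : R * 'rV[R]_n | 0 <= z.1], continuous (fun z => h z.1 z.2)}.
Hypothesis hpos : forall t x, 0 <= t -> I x -> 0 < h t x.
Hypothesis cI : compact I.

Lemma exists_C1_slice_approx : exists P : R -> R -> 'rV[R]_n -> R,
  (forall tau e, 0 <= tau -> 0 < e -> e <= 1 -> C1 (P tau e)) /\
  (forall tau e x, 0 <= tau -> 0 < e -> e <= 1 -> I x ->
     (1 - e) * h tau x <= P tau e x <= (1 + e) * h tau x).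
Proof.
have approx tau e : exists p, 0 <= tau -> 0 < e -> e <= 1 ->
    C1 p /\ forall x, I x -> (1 - e) * h tau x <= p x <= (1 + e) * h tau x.
  have [[tau0 e0 e1]|] := pselect [/\ 0 <= tau, 0 < e & e <= 1]; last first.
    by move=> nh; exists (fun _ => 0) => *; exfalso; exact: nh.
  have [|p Cp pb] := C1_approx cI (fun x => hpos tau0) _ e0 e1.
    by move=> c _; apply: continuous_slice.
  by exists p.
have [P PS] := choice (fun tau => ex_intro _ _ (projT2 (choice (approx tau)))).
exists P; split=> [tau e tau0 e0 e1|tau e x tau0 e0 e1]; case: (PS tau e tau0 e0 e1) => //.
by move=> _; apply.
Qed.

Lemma exists_time_mesh : exists N : nat -> nat, (forall k, 0 < N k)%N /\
  forall k i x, (i < N k)%N -> I x ->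
    2 / 3 * h (k%:R + i%:R / (N k)%:R) x <= h (k%:R + i.+1%:R / (N k)%:R) x.
Proof.
have mesh k : exists N : nat, (0 < N)%N /\ forall i x, (i < N)%N -> I x ->
    2 / 3 * h (k%:R + i%:R / N%:R) x <= h (k%:R + i.+1%:R / N%:R) x.
  have [d d0 hd] := uniform_time_step hc cI (ler0n _ k) hpos.
  exists (Num.truncn d^-1).+1; split=> // i x iN Ix.
  set N := (Num.truncn d^-1).+1 in iN *.
  have N0 : 0 < N%:R :> R by rewrite ltr0n.
  have Nd : N%:R^-1 <= d.
    rewrite -[X in _ <= X]invrK lef_pV2 ?posrE ?invr_gt0 //.
    exact: ltW (truncnS_gt _).
  have e : i.+1%:R / N%:R = i%:R / N%:R + N%:R^-1 :> R.
    by rewrite -addn1 natrD mulrDl mul1r.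
  have iN1 : i.+1%:R / N%:R <= 1 :> R by rewrite ler_pdivrMr // mul1r ler_nat.
  have i0 : 0 <= i%:R / N%:R :> R by rewrite divr_ge0.
  have Ni0 : 0 <= N%:R^-1 :> R by rewrite invr_ge0 ltW.
  by apply: hd => //; apply/andP; split; lra.
have [N NP] := choice mesh; exists N; split=> [k|k]; first by case: (NP k).
by case: (NP k).
Qed.

End Choices.

Theorem lemma3 (R : realType) (n : nat) (h : R -> 'rV[R]_n -> R)
  (K : set 'rV[R]_n) :
  {within [set z : R * 'rV[R]_n | 0 <= z.1], continuous (fun z => h z.1 z.2)} ->
  (forall t x, 0 <= t -> 0 <= h t x) ->
  closed K ->
  (forall t x, 0 <= t -> (h t x = 0 <-> K x)) ->
  (forall x t s, 0 <= t -> t <= s -> h s x <= h t x) ->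
  forall I : set 'rV[R]_n, compact I -> I `&` K = set0 ->
  exists g : R -> 'rV[R]_n -> R,
    [/\ {within [set z : R * 'rV[R]_n | 0 <= z.1 /\ I z.2],
          continuous (fun z => g z.1 z.2)},
        (forall t x, 0 <= t -> I x -> 0 <= g t x),
        C1_on [set z : R * 'rV[R]_n | 0 <= z.1 /\ I° z.2] (fun z => g z.1 z.2),
        (forall t x, 0 <= t -> I x -> h t x / 2 <= g t x /\ g t x <= 2 * h t x) &
        (forall x t s, I x -> 0 <= t -> t <= s -> g s x <= g t x)].
Proof.
move=> hc h0 _ hK hmono I cI IK.
have hpos t x : 0 <= t -> I x -> 0 < h t x.
  move=> t0 Ix; rewrite lt0r h0 // andbT; apply/eqP => /(hK t x t0) Kx.
  by have : (I `&` K) x by []; rewrite IK.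
have [P [P_C1 P_bounds]] := exists_C1_slice_approx hc hpos cI.
have [N [N_gt0 N_mesh]] := exists_time_mesh hc hpos cI.
have bounds := smooth_h_bounds hmono hpos P_bounds N_gt0 N_mesh.
have gC1 := C1_smooth_h P_C1 N_gt0.
exists (smooth_h P N); split.
- by apply: continuous_subspaceT => z; exact: C1_continuous gC1 z.
- by move=> t x t0 Ix; have /andP[+ _] := bounds t x t0 Ix; have := h0 t x t0; lra.
- exact: C1_on_C1.
- by move=> t x t0 Ix; apply/andP; exact: bounds.
- by move=> x t s Ix t0 ts; exact: (smooth_h_anti hmono hpos P_bounds N_gt0 Ix t0 ts).
Qed.
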